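(* (i) For any $u,v\in\mathcal{L}PSH^*(\mathbb{C}^n)$, \[ c_\infty(u+v)\le c_\infty(\max\{u,v\})\le\min\{c_\infty(u),c_\infty(v)\}. \] (ii) If $u\in\mathcal{L}PSH(\mathbb{C}^n)$ and $v\in\mathcal{L}PSH^*(\mathbb{C}^n)$ satisfy $\limsup_{|z|\to\infty}\frac{u(z)}{v(z)}\le\sigma<\infty$, then $c_\infty(u)\ge\sigma^{-1}c_\infty(v)$.
   Context: $\mathcal{L}PSH(\mathbb{C}^n)$: plurisubharmonic $u$ on $\mathbb{C}^n$ with $\limsup_{|z|\to\infty}u(z)/\log|z|<\infty$; $\mathcal{L}PSH^*(\mathbb{C}^n)$: those with $u(z)\to+\infty$ as $|z|\to\infty$. $g\in L^2(\infty)$ means $\int_{\mathbb{C}^n\setminus K}|g|^2d\lambda<\infty$ for some compact $K$; $c_\infty(u)=\inf\{c>0:e^{-cu}\in L^2(\infty)\}$ (with $\inf\emptyset=+\infty$). *)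

From HB Require Import structures.
From mathcomp Require Import all_boot all_order all_algebra.
From mathcomp Require Import all_classical all_reals all_analysis.
Import Order.TTheory GRing.Theory Num.Theory.
Import numFieldNormedType.Exports.
Set Implicit Arguments. Unset Strict Implicit. Unset Printing Implicit Defensive.
Local Open Scope classical_set_scope.
Local Open Scope ring_scope.

Section Defs.
Variables (R : realType) (n : nat).

(* A point z = x + i y of C^n, represented as the pair (x, y) of real row vectors;
   it carries the product (= Euclidean) topology of R^(2n). *)
Definition Cn : Type := ('rV[R]_n * 'rV[R]_n)%type.

Definition cnorm (z : Cn) : R :=
  Num.sqrt (\sum_(j < n) (z.1 ord0 j ^+ 2 + z.2 ord0 j ^+ 2)).

(* the point a + e^{i t} b of the complex line through a in direction b *)
Definition circ_pt (a b : Cn) (t : R) : Cn :=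
  (a.1 + (cos t *: b.1 - sin t *: b.2), a.2 + (cos t *: b.2 + sin t *: b.1)).

Definition usc (u : Cn -> \bar R) : Prop :=
  forall c : R, open [set z : Cn | (u z < c%:E)%E].

(* plurisubharmonic on C^n: usc, values in [-oo,+oo), not identically -oo,
   and the restriction to every complex line satisfies the sub-mean-value
   inequality on every circle (i.e. is subharmonic or identically -oo). *)
Definition psh (u : Cn -> \bar R) : Prop :=
  [/\ usc u,
      (forall z, (u z < +oo)%E),
      (exists z, (-oo < u z)%E) &
      (forall a b : Cn,
        (u a <= ((2 * pi)^-1)%:E *
           \int[lebesgue_measure]_(t in `[0%R, (2 * pi)%R]) u (circ_pt a b t))%E)].

(* the Lelong class LPSH(C^n): limsup_{|z|->oo} u(z)/log|z| < oo *)
Definition LPSH (u : Cn -> \bar R) : Prop :=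
  psh u /\ exists C r : R, forall z, r < cnorm z -> (u z <= (C * ln (cnorm z))%:E)%E.

Definition LPSHstar (u : Cn -> \bar R) : Prop :=
  LPSH u /\ forall M : R, exists r : R, forall z, r < cnorm z -> (M%:E < u z)%E.

Fixpoint iint (m : nat) (f : (nat -> R) -> \bar R) : \bar R :=
  match m with
  | 0 => f (fun _ => 0)
  | m'.+1 => (\int[lebesgue_measure]_t
                 iint m' (fun x => f (fun k => if k is k'.+1 then x k' else t)))%E
  end.

(* integral with respect to Lebesgue measure on C^n = R^(2n) *)
Definition cn_integral (F : Cn -> \bar R) : \bar R :=
  iint (2 * n) (fun x => F (\row_(j < n) x (val j), \row_(j < n) x (n + val j)%N)).

Definition L2inf (g : Cn -> \bar R) : Prop :=
  exists K : set Cn, compact K /\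
    (cn_integral (fun z => (\1_(~` K) z)%:E * (`|g z| * `|g z|)) < +oo)%E.

(* c_oo(u) = inf { c > 0 : e^{-c u} in L^2(oo) }, inf of the empty set = +oo *)
Definition c_infty (u : Cn -> \bar R) : \bar R :=
  ereal_inf [set c%:E | c in [set c : R | 0 < c /\
                 L2inf (fun z => expeR (- (c%:E * u z)))%E]].

End Defs.

From HB Require Import structures.
From mathcomp Require Import all_boot all_order all_algebra.
From mathcomp Require Import all_classical all_reals all_analysis.
Import Order.TTheory GRing.Theory Num.Theory.
Import numFieldNormedType.Exports.
Local Open Scope classical_set_scope.
Local Open Scope ring_scope.

(** Whether [exp (-c u)] is square integrable near infinity depends only on
    [u] outside a compact set, and is monotone in [u]: if [u <= a v] near
    infinity with [a > 0], then [exp (-a c v) <= exp (-c u)] there, so every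
    admissible exponent [c] of [u] gives the admissible exponent [a c] of [v],
    whence [c_oo(v) <= a c_oo(u)].  Part (i) is the case [a = 1], since
    [u, v <= max(u, v) <= u + v] once [u, v >= 0]; part (ii) takes
    [a = sigma + e] and lets [e] tend to [0]. *)

Section extended_real_bounds.
Context {R : realType}.
Local Open Scope ereal_scope.

Lemma lee_mul_of_ratio (x y : \bar R) (a : R) :
  0 < y < +oo -> x * ((fine y)^-1)%:E <= a%:E -> x <= a%:E * y.
Proof.
case: y => [w| |] /andP[y0 yoo] //.
by rewrite lee_pdivrMr -?lte_fin.
Qed.

Lemma lee_mul_addgt0 (x : \bar R) (s c : R) : (0 < c)%R ->
  (forall e, (0 < e)%R -> x <= ((s + e) * c)%:E) -> x <= (s * c)%:E.
Proof.
move=> c0 le_x; apply/lee_addgt0Pr => e e0.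
by have := le_x (e / c)%R (divr_gt0 e0 c0); rewrite mulrDl divfK ?gt_eqF // EFinD.
Qed.

End extended_real_bounds.

Section iterated_integral.
Context {R : realType}.
Local Open Scope ereal_scope.

(* The integral of a nonnegative function is the supremum over its simple
   minorants, which is monotone without any measurability assumption. *)
Lemma ge0_le_integral_nonmeasurable d (T : measurableType d)
    (mu : {measure set T -> \bar R}) (f g : T -> \bar R) :
  (forall x, 0 <= f x) -> (forall x, f x <= g x) ->
  \int[mu]_x f x <= \int[mu]_x g x.
Proof.
move=> f0 fg; have g0 x : 0 <= g x by apply: le_trans (fg x).
rewrite !ge0_integralE //= !patch_setT.
apply: ereal_sup_le => _ [h hf <-]; exists h => //= x.
exact: le_trans (hf x) (fg x).
Qed.

Lemma iint_ge0 m (f : (nat -> R) -> \bar R) :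
  (forall x, 0 <= f x) -> 0 <= iint m f.
Proof.
elim: m f => [|m IH] f f0 /=; first exact: f0.
by apply: integral_ge0 => t _; apply: IH.
Qed.

Lemma le_iint m (f g : (nat -> R) -> \bar R) :
  (forall x, 0 <= f x) -> (forall x, f x <= g x) -> iint m f <= iint m g.
Proof.
elim: m f g => [|m IH] f g f0 fg /=; first exact: fg.
by apply: ge0_le_integral_nonmeasurable => t; [apply: iint_ge0 | apply: IH].
Qed.

End iterated_integral.

Section near_infinity.
Context {R : realType} {n : nat}.
Implicit Types (z : Cn R n) (r : R).

Definition near_infty (P : Cn R n -> Prop) : Prop :=
  exists r : R, forall z, r < cnorm z -> P z.

Lemma near_inftyW {P Q : Cn R n -> Prop} :
  (forall z, P z -> Q z) -> near_infty P -> near_infty Q.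
Proof. by move=> PQ [r Pr]; exists r => z /Pr/PQ. Qed.

Lemma near_inftyI {P Q : Cn R n -> Prop} :
  near_infty P -> near_infty Q -> near_infty (fun z => P z /\ Q z).
Proof.
move=> [r1 P1] [r2 Q2]; exists (Num.max r1 r2) => z.
by rewrite gt_max => /andP[/P1 ? /Q2 ?].
Qed.

Lemma coord_le_cnorm z i : `|z.1 ord0 i| <= cnorm z /\ `|z.2 ord0 i| <= cnorm z.
Proof.
have sq_ge0 j : 0 <= z.1 ord0 j ^+ 2 + z.2 ord0 j ^+ 2 by rewrite addr_ge0 ?sqr_ge0.
have le_sum : z.1 ord0 i ^+ 2 + z.2 ord0 i ^+ 2 <=
    \sum_(j < n) (z.1 ord0 j ^+ 2 + z.2 ord0 j ^+ 2).
  by rewrite (bigD1 i) //= lerDl sumr_ge0.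
rewrite /cnorm -!sqrtr_sqr !ler_sqrt ?sumr_ge0 //.
by split; apply: le_trans le_sum; rewrite ?lerDl ?lerDr sqr_ge0.
Qed.

Definition cube r : set (Cn R n) :=
  [set v : 'rV[R]_n | forall i, `[- r, r]%classic (v ord0 i)] `*`
  [set v : 'rV[R]_n | forall i, `[- r, r]%classic (v ord0 i)].

Lemma cube_compact r : compact (cube r).
Proof.
by apply: compact_setX; apply: (@rV_compact _ _ (fun=> `[- r, r]%classic)) => i;
  apply: segment_compact.
Qed.

Lemma lt_cnorm_notin_cube r z : ~ cube r z -> r < cnorm z.
Proof.
move=> notin; rewrite ltNge; apply/negP => le_r; apply: notin.
split => i /=; rewrite in_itv /= -ler_norml; apply: le_trans le_r;
  [exact: (coord_le_cnorm z i).1 | exact: (coord_le_cnorm z i).2].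
Qed.

Local Open Scope ereal_scope.

Lemma le_cn_integral (F G : Cn R n -> \bar R) : (forall z, 0 <= F z) ->
  (forall z, F z <= G z) -> cn_integral F <= cn_integral G.
Proof. by move=> F0 FG; apply: le_iint. Qed.

Lemma L2inf_le_near_infty (g h : Cn R n -> \bar R) :
  near_infty (fun z => `|g z| <= `|h z|) -> L2inf h -> L2inf g.
Proof.
move=> [r gh] [K [cK Kfin]]; exists (K `|` cube r); split.
  exact: compactU (cube_compact r).
apply: le_lt_trans Kfin; apply: le_cn_integral => z.
  by rewrite mule_ge0 ?mule_ge0 // lee_fin indic_ge0.
rewrite /indic; have [|] := boolP (z \in ~` (K `|` cube r)); last first.
  by rewrite mul0e mule_ge0 ?mule_ge0 // lee_fin; case: (_ \in _).
rewrite in_setC in_setU negb_or => /andP[notK /negP notcube].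
have {}gh : `|g z| <= `|h z|.
  by apply/gh/lt_cnorm_notin_cube => /mem_set.
by rewrite in_setC notK !mul1e lee_pmul.
Qed.

End near_infinity.

Section log_canonical_threshold_at_infinity.
Context {R : realType} {n : nat}.
Implicit Types (u v : Cn R n -> \bar R).
Local Open Scope ereal_scope.

Definition L2inf_exponents u : set R :=
  [set c : R | (0 < c)%R /\ L2inf (fun z => expeR (- (c%:E * u z)))].

Lemma c_infty_le u c : L2inf_exponents u c -> c_infty u <= c%:E.
Proof. by move=> uc; apply: ereal_inf_lbound; exists c. Qed.

Lemma c_infty_ge u x :
  (forall c, L2inf_exponents u c -> x <= c%:E) -> x <= c_infty u.
Proof. by move=> ux; apply: le_ereal_inf_tmp => _ [c uc <-]; apply: ux. Qed.

Lemma L2inf_exponents_scale (a : R) u v c : (0 < a)%R ->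
  near_infty (fun z => u z <= a%:E * v z) ->
  L2inf_exponents u c -> L2inf_exponents v (a * c)%R.
Proof.
move=> a0 uv [c0 L2u]; split; first exact: mulr_gt0.
apply: L2inf_le_near_infty L2u; apply: near_inftyW uv => z uvz.
rewrite !gee0_abs ?expeR_ge0 // lee_expeR leeN2 mulrC EFinM -muleA.
by apply: lee_wpmul2l; rewrite // lee_fin ltW.
Qed.

Lemma c_infty_le_scale (a : R) u v c : (0 < a)%R ->
  near_infty (fun z => u z <= a%:E * v z) ->
  L2inf_exponents u c -> c_infty v <= (a * c)%:E.
Proof. by move=> a0 uv uc; apply: c_infty_le; apply: L2inf_exponents_scale uc. Qed.

Lemma le_c_infty u v : near_infty (fun z => u z <= v z) -> c_infty v <= c_infty u.
Proof.
move=> uv; apply: c_infty_ge => c uc; rewrite -[c]mul1r.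
by apply: c_infty_le_scale uc => //; apply: near_inftyW uv => z; rewrite mul1e.
Qed.

End log_canonical_threshold_at_infinity.

Theorem proposition5p1 (R : realType) (n : nat) :
  (forall u v : Cn R n -> \bar R, LPSHstar u -> LPSHstar v ->
     (c_infty (fun z => (u z + v z)%E) <= c_infty (fun z => maxe (u z) (v z)))%E /\
     (c_infty (fun z => maxe (u z) (v z)) <= mine (c_infty u) (c_infty v))%E)
  /\
  (forall (u v : Cn R n -> \bar R) (sigma : R),
     0 < sigma -> LPSH u -> LPSHstar v ->
     (forall e : R, 0 < e -> exists r : R, forall z : Cn R n, r < cnorm z ->
        (u z * ((fine (v z))^-1)%:E <= (sigma + e)%:E)%E) ->
     ((sigma^-1)%:E * c_infty v <= c_infty u)%E).
Proof.
split.
  move=> u v [_ u_infty] [_ v_infty]; split.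
    apply: le_c_infty; apply: near_inftyW _ (near_inftyI (u_infty 0) (v_infty 0)).
    by move=> z [u0 v0]; rewrite ge_max leeDl ?leeDr ?ltW.
  by rewrite le_min !le_c_infty //; exists 0 => z _; rewrite le_max lexx ?orbT.
move=> u v sigma sigma0 _ [[[_ v_fin _ _] _] v_infty] ratio_le.
apply: c_infty_ge => c uc; have c0 := uc.1.
rewrite lee_pdivrMl // -EFinM; apply: lee_mul_addgt0 c0 _ => e e0.
apply: c_infty_le_scale uc; first exact: addr_gt0.
apply: near_inftyW _ (near_inftyI (ratio_le e e0) (v_infty 0)) => z [ratio_z v0].
by apply: lee_mul_of_ratio ratio_z; rewrite v0 v_fin.
Qed.
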